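(* Let $k$ be a field and $A_k$ a $k$-algebra with a $k$-linear involution $a\mapsto a^*$. Let $E$ be a finite-dimensional $A_k$-module with a nondegenerate $k$-bilinear form $b$ satisfying $b(ax,y)=b(x,a^*y)$ for all $a\in A_k$, $x,y\in E$, where either $b$ is alternating, or $b$ is symmetric and $\mathrm{char}(k)\neq2$. Let $S$ be an $A_k$-submodule of $E$ which is totally isotropic ($b(x,y)=0$ for all $x,y\in S$) and maximal among totally isotropic $A_k$-submodules. Let $S_\perp$ be its orthogonal for $b$, $X=S_\perp/S$, and $b_1$ the nondegenerate form on $X$ induced by $b$. Then: (i) the $A_k$-module $X$ is semisimple, and the only $A_k$-submodule of $X$ totally isotropic for $b_1$ is $0$; (ii) if $b$ is symmetric (and $\mathrm{char}(k)\neq2$), then $b$ is isomorphic to the orthogonal direct sum of $b_1$ and a hyperbolic form of rank $2\dim S$. *)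

From HB Require Import structures.
From mathcomp Require Import all_boot all_order all_algebra.

Set Implicit Arguments.
Unset Strict Implicit.
Unset Printing Implicit Defensive.

Import Order.TTheory GRing.Theory Num.Theory.
Local Open Scope ring_scope.

Section Defs.
Variable k : fieldType.

Definition klinear (U V : lmodType k) (f : U -> V) : Prop :=
  forall (c : k) (x y : U), f (c *: x + y) = c *: f x + f y.

Definition is_involution (A : algType k) (star : A -> A) : Prop :=
  [/\ klinear star,
      forall a : A, star (star a) = a &
      forall a a' : A, star (a * a') = star a' * star a].

Definition is_module_action (A : algType k) (E : lmodType k) (act : A -> E -> E) : Prop :=
  [/\ forall a : A, klinear (act a),
      forall (c : k) (a a' : A) (x : E), act (c *: a + a') x = c *: act a x + act a' x,
      forall x : E, act 1 x = x &
      forall (a a' : A) (x : E), act (a * a') x = act a (act a' x)].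

Definition kbilinear_form (E : lmodType k) (b : E -> E -> k) : Prop :=
  (forall (c : k) (x y z : E), b (c *: x + y) z = c * b x z + b y z) /\
  (forall (c : k) (x y z : E), b x (c *: y + z) = c * b x y + b x z).

Definition nondegenerate_form (E : lmodType k) (b : E -> E -> k) : Prop :=
  (forall x : E, (forall y, b x y = 0) -> x = 0) /\
  (forall y : E, (forall x, b x y = 0) -> y = 0).

Definition alternating_form (E : lmodType k) (b : E -> E -> k) : Prop :=
  forall x : E, b x x = 0.

Definition symmetric_bform (E : lmodType k) (b : E -> E -> k) : Prop :=
  forall x y : E, b x y = b y x.

Definition Asubmodule (A : algType k) (E : vectType k) (act : A -> E -> E)
  (U : {vspace E}) : Prop :=
  forall (a : A) (x : E), x \in U -> act a x \in U.

Definition tot_isotropic (E : vectType k) (b : E -> E -> k) (U : {vspace E}) : Prop :=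
  forall x y : E, x \in U -> y \in U -> b x y = 0.

Definition in_orth (E : vectType k) (b : E -> E -> k) (S : {vspace E}) (x : E) : Prop :=
  forall s : E, s \in S -> b x s = 0.

Definition semisimple_module (A : algType k) (X : vectType k) (act : A -> X -> X) : Prop :=
  forall U : {vspace X}, Asubmodule act U ->
    exists V : {vspace X}, Asubmodule act V /\ (U + V)%VS = fullv /\ (U :&: V)%VS = 0%VS.

Definition hyperbolic_form (r : nat) (u v : 'rV[k]_(r + r)) : k :=
  (u *m block_mx (0 : 'M[k]_(r, r)) 1%:M 1%:M 0 *m v^T) ord0 ord0.

Definition orth_sum (U V : lmodType k) (b1 : U -> U -> k) (b2 : V -> V -> k)
  (x y : U * V) : k := b1 x.1 y.1 + b2 x.2 y.2.

End Defs.

(* Let S_perp be the left orthogonal of S, so that X = S_perp / S.  The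
   preimage in S_perp of a totally isotropic submodule U of X is a totally
   isotropic submodule containing S, hence equal to S by maximality, so U = 0.
   Consequently the orthogonal of a submodule U of X, itself a submodule by
   adjointness, meets U in a totally isotropic submodule, i.e. trivially; as
   its dimension is at least dim X - dim U, it is a complement of U.
   For (ii), take a basis s of S and, by nondegeneracy, a dual family t with
   b(t_j, s_i) = delta_ij; replacing t_j by t_j - 1/2 sum_l b(t_j, t_l) s_l
   makes the t_j pairwise orthogonal (this is where char k <> 2 is used).  The
   span H of s and t is hyperbolic of rank 2 dim S, E = H + H^perp, and pi
   maps H^perp isometrically onto X. *)

From HB Require Import structures.
From mathcomp Require Import all_boot all_order all_algebra.
From mathcomp Require Import ring.
Import Order.TTheory GRing.Theory Num.Theory.
Local Open Scope ring_scope.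

Section BilinearForms.
Set Implicit Arguments.
Unset Strict Implicit.
Variable k : fieldType.

Section LinearFacts.
Variables (U V : lmodType k) (f : U -> V) (f_lin : klinear f).

Let fL : {linear U -> V} := HB.pack f (GRing.isLinear.Build k U V *:%R f f_lin).

Lemma klinear0 : f 0 = 0. Proof. exact: (linear0 fL). Qed.
Lemma klinearD x y : f (x + y) = f x + f y. Proof. exact: (linearD fL). Qed.
Lemma klinearB x y : f (x - y) = f x - f y. Proof. exact: (linearB fL). Qed.
Lemma klinearZ c x : f (c *: x) = c *: f x. Proof. exact: (linearZ_LR fL). Qed.
Lemma klinear_sum I (r : seq I) (P : pred I) (F : I -> U) :
  f (\sum_(i <- r | P i) F i) = \sum_(i <- r | P i) f (F i).
Proof. exact: (linear_sum fL). Qed.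

End LinearFacts.

Definition klfun (U V : vectType k) (f : U -> V) (f_lin : klinear f) : 'Hom(U, V) :=
  linfun (HB.pack f (GRing.isLinear.Build k U V *:%R f f_lin) : {linear U -> V}).

Lemma klfunE (U V : vectType k) (f : U -> V) (f_lin : klinear f) x : klfun f_lin x = f x.
Proof. exact: lfunE. Qed.

Section BilinearFacts.
Variables (V : lmodType k) (f : V -> V -> k) (f_bil : kbilinear_form f).

Lemma form_linl z : klinear (V := k^o) (f^~ z). Proof. by move=> c x y; apply: f_bil.1. Qed.
Lemma form_linr z : klinear (V := k^o) (f z). Proof. by move=> c x y; apply: f_bil.2. Qed.

Lemma formDl x y z : f (x + y) z = f x z + f y z. Proof. exact: (klinearD (form_linl z) x y). Qed.
Lemma formDr x y z : f z (x + y) = f z x + f z y. Proof. exact: (klinearD (form_linr z) x y). Qed.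
Lemma formBl x y z : f (x - y) z = f x z - f y z. Proof. exact: (klinearB (form_linl z) x y). Qed.
Lemma formBr x y z : f z (x - y) = f z x - f z y. Proof. exact: (klinearB (form_linr z) x y). Qed.
Lemma formZl c x z : f (c *: x) z = c * f x z. Proof. exact: (klinearZ (form_linl z) c x). Qed.
Lemma formZr c x z : f z (c *: x) = c * f z x. Proof. exact: (klinearZ (form_linr z) c x). Qed.
Lemma form_sumlZ n (e : 'I_n -> k) (v : 'I_n -> V) z :
  f (\sum_i e i *: v i) z = \sum_i e i * f (v i) z.
Proof. by rewrite (klinear_sum (form_linl z)); apply: eq_bigr => i _; rewrite formZl. Qed.
Lemma form_sumrZ n (e : 'I_n -> k) (v : 'I_n -> V) z :
  f z (\sum_i e i *: v i) = \sum_i e i * f z (v i).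
Proof. by rewrite (klinear_sum (form_linr z)); apply: eq_bigr => i _; rewrite formZr. Qed.

End BilinearFacts.

Lemma in_orth_vbasis (V : vectType k) (f : V -> V -> k) (U : {vspace V}) x :
  kbilinear_form f ->
  in_orth f U x <-> forall i : 'I_(\dim U), f x (vbasis U)`_i = 0.
Proof.
move=> f_bil; split=> [xU i | xb u /coord_vbasis ->].
  by apply: xU; apply: vbasis_mem; apply: mem_nth; rewrite size_tuple.
by rewrite form_sumrZ // big1 // => i _; rewrite xb mulr0.
Qed.

Lemma in_orth_lin (V : vectType k) (f : V -> V -> k) (U : {vspace V}) c x y :
  kbilinear_form f -> in_orth f U x -> in_orth f U y -> in_orth f U (c *: x + y).
Proof. by move=> f_bil xU yU u uU; rewrite f_bil.1 xU // yU // mulr0 addr0. Qed.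

Lemma orthv_exists (V : vectType k) (f : V -> V -> k) (U : {vspace V}) :
  kbilinear_form f ->
  exists W : {vspace V},
    (forall v, v \in W <-> in_orth f U v) /\ (\dim {:V} <= \dim W + \dim U)%N.
Proof.
move=> f_bil; pose h v := \row_(i < \dim U) f v (vbasis U)`_i.
have h_lin : klinear h by move=> c x y; apply/rowP => i; rewrite !mxE f_bil.1.
exists (lker (klfun h_lin)); split.
  move=> v; rewrite memv_ker klfunE.
  split=> [/eqP/rowP hv | /(in_orth_vbasis _ _ f_bil) hv].
    by apply/(in_orth_vbasis _ _ f_bil) => i; have := hv i; rewrite !mxE.
  by apply/eqP/rowP => i; rewrite !mxE hv.
have := limg_ker_dim (klfun h_lin) fullv; rewrite capfv => <-.
rewrite leq_add2l (leq_trans (dimvS (subvf _))) //.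
by rewrite dimvf /dim /= mul1n.
Qed.

Lemma dual_family_exists (V : vectType k) (f : V -> V -> k) n (v : n.-tuple V) :
  kbilinear_form f -> (forall y, (forall x, f x y = 0) -> y = 0) -> free v ->
  exists t : 'I_n -> V, forall i j : 'I_n, f (t j) v`_i = (i == j)%:R.
Proof.
move=> f_bil f_ndr v_free; pose h x := \row_(i < n) f x v`_i.
have h_lin : klinear h by move=> c x y; apply/rowP => i; rewrite !mxE f_bil.1.
pose g := klfun h_lin.
pose dot (u w : 'rV[k]_n) := \sum_i u 0 i * w 0 i.
have dot_bil : kbilinear_form dot.
  split=> c x y z; rewrite /dot mulr_sumr -big_split /=; apply: eq_bigr => i _.
    by rewrite !mxE mulrDl mulrA.
  by rewrite !mxE mulrDr mulrCA.
have [W [memW dimW]] := orthv_exists (limg g) dot_bil.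
have W0 : W = 0%VS.
  apply/vspaceP => w; rewrite memv0; apply/idP/eqP => [/memW wW | ->]; last exact: mem0v.
  have: \sum_i w 0 i *: v`_i = 0.
    apply: f_ndr => x; rewrite form_sumrZ //.
    rewrite -[RHS](wW _ (memv_img g (memvf x))) /dot.
    by apply: eq_bigr => i _; rewrite klfunE mxE mulrC.
  by move/freeP: v_free => v_free /v_free w0; apply/rowP => i; rewrite mxE w0.
have g_onto : limg g = fullv.
  by apply/eqP; rewrite eqEdim subvf /=; move: dimW; rewrite W0 dimv0.
exists (fun j => (g^-1)%VF (delta_mx 0 j)) => i j.
have j_img : delta_mx 0 j \in limg g by rewrite g_onto memvf.
have /rowP/(_ i) := limg_lfunVK j_img.
by rewrite klfunE !mxE eq_sym.
Qed.

Lemma klinear_bijective (U V : vectType k) (f : U -> V) :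
  klinear f -> (forall x, f x = 0 -> x = 0) -> (forall y, exists x, f x = y) ->
  bijective f.
Proof.
move=> f_lin f_ker f_onto.
have ker0 : lker (klfun f_lin) == 0%VS.
  apply/lker0P => x y; rewrite !klfunE => fxy; apply/eqP; rewrite -subr_eq0.
  by apply/eqP/f_ker; rewrite (klinearB f_lin) fxy subrr.
have fK : cancel f (klfun f_lin)^-1%VF by move=> x; rewrite -(klfunE f_lin) lker0_lfunK.
by exists (klfun f_lin)^-1%VF => // y; have [x <-] := f_onto y; rewrite fK.
Qed.

Lemma hyperbolic_form_row_mx r (u1 u2 v1 v2 : 'rV[k]_r) :
  hyperbolic_form (row_mx u1 u2) (row_mx v1 v2) =
  \sum_i u2 0 i * v1 0 i + \sum_i u1 0 i * v2 0 i.
Proof.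
rewrite /hyperbolic_form mul_row_block !mulmx0 !mulmx1 addr0 add0r tr_row_mx.
by rewrite mul_row_col mxE !mxE; congr (_ + _); apply: eq_bigr => i _; rewrite !mxE.
Qed.

Lemma hyperbolic_form0l n (u : 'rV[k]_(n + n)) : hyperbolic_form 0 u = 0.
Proof. by rewrite /hyperbolic_form !mul0mx mxE. Qed.

Lemma anisotropic_semisimple (A : algType k) (star : A -> A) (X : vectType k)
    (actX : A -> X -> X) (b1 : X -> X -> k) :
  kbilinear_form b1 ->
  (forall a z w, b1 (actX a z) w = b1 z (actX (star a) w)) ->
  (forall U, Asubmodule actX U -> tot_isotropic b1 U -> U = 0%VS) ->
  semisimple_module actX.
Proof.
move=> b1_bil b1_adj anis U U_mod.
have [W [memW dimW]] := orthv_exists U b1_bil.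
have W_mod : Asubmodule actX W.
  by move=> a x /memW xW; apply/memW => u uU; rewrite b1_adj; apply/xW/U_mod.
have UW0 : (U :&: W)%VS = 0%VS.
  apply: anis => [a x | x y]; rewrite !memv_cap.
    by case/andP => xU xW; rewrite U_mod ?W_mod.
  by case/andP => _ /memW xW /andP [yU _]; apply: xW.
exists W; split=> //; split=> //.
by apply/eqP; rewrite eqEdim subvf /= dimv_disjoint_sum // addnC.
Qed.

Section Quotient.
Variables (A : algType k) (star : A -> A) (E : vectType k) (act : A -> E -> E).
Variables (b : E -> E -> k) (S : {vspace E}).
Variables (X : vectType k) (pi : E -> X) (actX : A -> X -> X) (b1 : X -> X -> k).
Hypotheses (b_bil : kbilinear_form b)
  (b_adj : forall a x y, b (act a x) y = b x (act (star a) y)).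
Hypotheses (S_mod : Asubmodule act S) (S_iso : tot_isotropic b S)
  (S_max : forall T, Asubmodule act T -> tot_isotropic b T -> (S <= T)%VS -> T = S).
Hypotheses (pi_lin : klinear pi)
  (pi_onto : forall z, exists x, in_orth b S x /\ pi x = z)
  (pi_ker : forall x, in_orth b S x -> (pi x = 0 <-> x \in S))
  (pi_act : forall a x, in_orth b S x -> actX a (pi x) = pi (act a x))
  (pi_form : forall x y, in_orth b S x -> in_orth b S y -> b1 (pi x) (pi y) = b x y).

Lemma in_orth_act a x : in_orth b S x -> in_orth b S (act a x).
Proof. by move=> xS s sS; rewrite b_adj xS // S_mod. Qed.

Lemma quotient_form_bilinear : kbilinear_form b1.
Proof.
split=> c z1 z2 z3; have [x1 [o1 <-]] := pi_onto z1;
  have [x2 [o2 <-]] := pi_onto z2; have [x3 [o3 <-]] := pi_onto z3.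
  by rewrite -pi_lin (pi_form (in_orth_lin _ b_bil o1 o2) o3) !pi_form // b_bil.1.
by rewrite -pi_lin (pi_form o1 (in_orth_lin _ b_bil o2 o3)) !pi_form // b_bil.2.
Qed.

Lemma quotient_form_adjoint a z w : b1 (actX a z) w = b1 z (actX (star a) w).
Proof.
have [x [ox <-]] := pi_onto z; have [y [oy <-]] := pi_onto w.
by rewrite !pi_act // (pi_form (in_orth_act a ox) oy) (pi_form ox (in_orth_act _ oy)).
Qed.

Lemma quotient_anisotropic U : Asubmodule actX U -> tot_isotropic b1 U -> U = 0%VS.
Proof.
move=> U_mod U_iso.
have [Sperp [memSperp _]] := orthv_exists S b_bil.
pose T := (Sperp :&: klfun pi_lin @^-1: U)%VS.
have memT x : x \in T <-> in_orth b S x /\ pi x \in U.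
  rewrite memv_cap -memv_preim klfunE.
  by split=> [/andP [/memSperp xS ->] | [/memSperp -> ->]].
have T_S : T = S.
  apply: S_max.
  - move=> a x /memT [xS xU]; apply/memT; rewrite -pi_act //.
    by split; [apply: in_orth_act | apply: U_mod].
  - by move=> x y /memT [xS xU] /memT [yS yU]; rewrite -pi_form //; apply: U_iso.
  - apply/subvP => s sS; have sSp : in_orth b S s by move=> t tS; apply: S_iso.
    by apply/memT; rewrite ((pi_ker sSp).2 sS) mem0v.
apply/eqP; rewrite -subv0; apply/subvP => z; have [x [xS <-]] := pi_onto z.
rewrite memv0 => xU; apply/eqP.
have : x \in T by apply/memT.
by rewrite T_S => /(pi_ker xS).2.
Qed.

End Quotient.


Lemma sum_mul_delta n (F : 'I_n -> k) j : \sum_i F i * (i == j)%:R = F j.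
Proof.
by rewrite (bigD1 j) //= eqxx mulr1 big1 ?addr0 // => i /negPf ->; rewrite mulr0.
Qed.

Definition lincomb (V : lmodType k) n (v : 'I_n -> V) (u : 'rV[k]_n) : V :=
  \sum_i u 0 i *: v i.

Lemma lincombP (V : lmodType k) n (v : 'I_n -> V) c u w :
  lincomb v (c *: u + w) = c *: lincomb v u + lincomb v w.
Proof.
rewrite /lincomb scaler_sumr -big_split; apply: eq_bigr => i _.
by rewrite !mxE scalerDl scalerA.
Qed.

Lemma lincomb0 (V : lmodType k) n (v : 'I_n -> V) : lincomb v 0 = 0.
Proof. by rewrite /lincomb big1 // => i _; rewrite mxE scale0r. Qed.

Section Witt.
Variables (E : vectType k) (b : E -> E -> k) (S : {vspace E}).
Variables (X : vectType k) (pi : E -> X) (b1 : X -> X -> k).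
Hypotheses (b_bil : kbilinear_form b) (b_sym : symmetric_bform b)
  (b_ndr : forall y, (forall x, b x y = 0) -> y = 0) (two_neq0 : (2 : k) != 0).
Hypothesis S_iso : tot_isotropic b S.
Hypotheses (pi_lin : klinear pi)
  (pi_onto : forall z, exists x, in_orth b S x /\ pi x = z)
  (pi_ker : forall x, in_orth b S x -> (pi x = 0 <-> x \in S))
  (pi_form : forall x y, in_orth b S x -> in_orth b S y -> b1 (pi x) (pi y) = b x y).

Let r := \dim S.
Let s (i : 'I_r) := (vbasis S)`_i.

Lemma vbasis_nth_mem i : s i \in S.
Proof. by apply: vbasis_mem; apply: mem_nth; rewrite size_tuple. Qed.

Lemma isotropic_dual_exists : exists t : 'I_r -> E,
  (forall i j, b (t j) (s i) = (i == j)%:R) /\ (forall i j, b (t i) (t j) = 0).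
Proof.
have [t t_dual] := dual_family_exists b_bil b_ndr (basis_free (vbasisP S)).
pose t' j := t j - 2^-1 *: \sum_l b (t j) (t l) *: s l.
have t'_dual i j : b (t' j) (s i) = (i == j)%:R.
  rewrite formBl // formZl // form_sumlZ // big1 => [|l _].
    by rewrite mulr0 subr0; apply: t_dual.
  by rewrite (S_iso (vbasis_nth_mem l) (vbasis_nth_mem i)) mulr0.
exists t'; split=> // i j.
rewrite {1}/t' formBl // formZl // form_sumlZ //.
under eq_bigr => l _ do rewrite (b_sym (s l)) t'_dual.
rewrite sum_mul_delta /t' formBr // formZr // form_sumrZ //.
under eq_bigr => l _ do rewrite t_dual.
rewrite sum_mul_delta (b_sym (t j)).
by field.
Qed.

Section DualFamily.
Variable t : 'I_r -> E.
Hypotheses (t_dual : forall i j, b (t j) (s i) = (i == j)%:R)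
  (t_iso : forall i j, b (t i) (t j) = 0).

Definition hcoord x : 'rV[k]_(r + r) := row_mx (\row_i b x (t i)) (\row_i b x (s i)).

Definition hsum (u : 'rV[k]_(r + r)) : E := lincomb s (lsubmx u) + lincomb t (rsubmx u).

Definition perp_part x := x - hsum (hcoord x).

Definition witt_map x : X * 'rV[k]_(r + r) := (pi (perp_part x), hcoord x).

Lemma hcoord_lin : klinear hcoord.
Proof.
move=> c x y; rewrite /hcoord scale_row_mx add_row_mx.
by congr row_mx; apply/rowP => i; rewrite !mxE b_bil.1.
Qed.

Lemma hsum_lin : klinear hsum.
Proof. by move=> c u w; rewrite /hsum !linearP /= !lincombP scalerDr addrACA. Qed.

Lemma hcoord_hsum u : hcoord (hsum u) = u.
Proof.
rewrite -[RHS]hsubmxK /hcoord; congr row_mx; apply/rowP => m.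
  rewrite !mxE formDl // !form_sumlZ // [X in _ + X]big1 ?addr0.
    by under eq_bigr => i _ do rewrite b_sym t_dual; rewrite sum_mul_delta mxE.
  by move=> i _; rewrite t_iso mulr0.
rewrite !mxE formDl // !form_sumlZ // big1 ?add0r.
  by under eq_bigr => i _ do rewrite t_dual eq_sym; rewrite sum_mul_delta mxE.
by move=> i _; rewrite (S_iso (vbasis_nth_mem i) (vbasis_nth_mem m)) mulr0.
Qed.

Lemma form_hsumr x u : b x (hsum u) = hyperbolic_form (hcoord x) u.
Proof.
rewrite -[u in RHS]hsubmxK hyperbolic_form_row_mx /hsum formDr // !form_sumrZ //.
by congr (_ + _); apply: eq_bigr => i _; rewrite mxE mulrC.
Qed.

Lemma hcoord_perp_part x : hcoord (perp_part x) = 0.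
Proof. by rewrite (klinearB hcoord_lin) hcoord_hsum subrr. Qed.

Lemma perp_part_orth x : in_orth b S (perp_part x).
Proof.
apply/(in_orth_vbasis _ _ b_bil) => i.
by have /(congr1 rsubmx)/rowP/(_ i) := hcoord_perp_part x; rewrite row_mxKr !mxE.
Qed.

Lemma form_witt x y :
  b x y = b1 (pi (perp_part x)) (pi (perp_part y)) + hyperbolic_form (hcoord x) (hcoord y).
Proof.
have -> : b x y = b (perp_part x + hsum (hcoord x)) (perp_part y + hsum (hcoord y)).
  by rewrite !subrK.
rewrite formDl // !(formDr b_bil (perp_part y)) (b_sym (hsum _) (perp_part y)).
rewrite !form_hsumr hcoord_hsum !hcoord_perp_part.
by rewrite !hyperbolic_form0l (pi_form (perp_part_orth x) (perp_part_orth y)) addr0 add0r.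
Qed.

Lemma hsum_mem u : rsubmx u = 0 -> hsum u \in S.
Proof.
rewrite /hsum => ->; rewrite lincomb0 addr0.
by apply: memv_suml => i _; apply/memvZ/vbasis_nth_mem.
Qed.

Lemma hsum_hcoord_mem x : x \in S -> hsum (hcoord x) = x.
Proof.
move=> xS; pose c := \row_i coord (vbasis S) i x.
have xE : x = hsum (row_mx c 0).
  rewrite /hsum row_mxKl row_mxKr lincomb0 addr0 {1}(coord_vbasis xS).
  by apply: eq_bigr => i _; rewrite mxE.
by rewrite {1}xE hcoord_hsum -xE.
Qed.

Lemma perp_part_lin : klinear perp_part.
Proof. by move=> c x y; rewrite /perp_part hcoord_lin hsum_lin scalerBr opprD addrACA. Qed.

Lemma witt_map_lin : klinear witt_map.
Proof. by move=> c x y; rewrite /witt_map perp_part_lin pi_lin hcoord_lin. Qed.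

Lemma witt_map_eq0 x : witt_map x = 0 -> x = 0.
Proof.
case=> pix hx; have x_perp : perp_part x = x.
  by rewrite /perp_part hx (klinear0 hsum_lin) subr0.
have xS : x \in S by rewrite -x_perp; apply/(pi_ker (perp_part_orth x)).
by rewrite -(hsum_hcoord_mem xS) hx (klinear0 hsum_lin).
Qed.

Lemma witt_map_onto zu : exists x, witt_map x = zu.
Proof.
case: zu => z u; have [x0 [x0S <-]] := pi_onto z.
have hc : hcoord (perp_part x0 + hsum u) = u.
  by rewrite (klinearD hcoord_lin) hcoord_perp_part hcoord_hsum add0r.
exists (perp_part x0 + hsum u); rewrite /witt_map hc {1}/perp_part hc addrK.
have x0_coord : rsubmx (hcoord x0) = 0.
  by rewrite row_mxKr; apply/rowP => i; rewrite !mxE; apply/x0S/vbasis_nth_mem.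
have hS := hsum_mem x0_coord.
have pi_hsum : pi (hsum (hcoord x0)) = 0.
  by apply/(pi_ker (fun y yS => S_iso hS yS)).
by rewrite /perp_part (klinearB pi_lin) pi_hsum subr0.
Qed.

End DualFamily.

Lemma witt_decomposition : exists phi : E -> X * 'rV[k]_(r + r),
  [/\ klinear phi, bijective phi &
      forall x y, orth_sum b1 (@hyperbolic_form k r) (phi x) (phi y) = b x y].
Proof.
have [t [t_dual t_iso]] := isotropic_dual_exists.
exists (witt_map t); split; first exact: witt_map_lin.
  apply: klinear_bijective; first exact: witt_map_lin.
    exact: witt_map_eq0.
  exact: witt_map_onto.
by move=> x y; rewrite (form_witt t_dual t_iso).
Qed.

End Witt.

End BilinearForms.

Theorem lemma4p2p4
  (k : fieldType) (A : algType k) (star : A -> A)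
  (E : vectType k) (act : A -> E -> E) (b : E -> E -> k)
  (S : {vspace E})
  (X : vectType k) (pi : E -> X) (actX : A -> X -> X) (b1 : X -> X -> k) :
  is_involution star ->
  is_module_action act ->
  kbilinear_form b ->
  nondegenerate_form b ->
  (forall (a : A) (x y : E), b (act a x) y = b x (act (star a) y)) ->
  (alternating_form b \/ (symmetric_bform b /\ (2 : k) != 0)) ->
  (* S is a totally isotropic Asubmodule, maximal among such *)
  Asubmodule act S ->
  tot_isotropic b S ->
  (forall T : {vspace E}, Asubmodule act T -> tot_isotropic b T ->
     (S <= T)%VS -> T = S) ->
  (* (X, pi) is the quotient S_perp / S, with induced action actX and form b1 *)
  klinear pi ->
  (forall z : X, exists x : E, in_orth b S x /\ pi x = z) ->
  (forall x : E, in_orth b S x -> (pi x = 0 <-> x \in S)) ->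
  (forall (a : A) (x : E), in_orth b S x -> actX a (pi x) = pi (act a x)) ->
  (forall x y : E, in_orth b S x -> in_orth b S y -> b1 (pi x) (pi y) = b x y) ->
  [/\ semisimple_module actX,
      (forall U : {vspace X}, Asubmodule actX U -> tot_isotropic b1 U -> U = 0%VS) &
      (symmetric_bform b /\ (2 : k) != 0 ->
         exists phi : E -> X * 'rV[k]_(\dim S + \dim S),
           [/\ klinear phi, bijective phi &
               forall x y : E,
                 orth_sum b1 (@hyperbolic_form k (\dim S)) (phi x) (phi y) = b x y])].
Proof.
move=> _ _ b_bil [_ b_ndr] b_adj _ S_mod S_iso S_max pi_lin pi_onto pi_ker pi_act pi_form.
have anis := quotient_anisotropic b_bil b_adj S_mod S_iso S_max
  pi_lin pi_onto pi_ker pi_act pi_form.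
split=> //.
  apply: anisotropic_semisimple anis.
    exact: quotient_form_bilinear b_bil pi_lin pi_onto pi_form.
  exact: quotient_form_adjoint b_adj S_mod pi_onto pi_act pi_form.
by case=> b_sym two_neq0; apply: witt_decomposition.
Qed.
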